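(* Let $\mathbb G=V_1\times V_2$ be a step-two Carnot group. Then $\mathcal A_h(\mathbb G)=\mathcal A(V_1\times V_2)$ if and only if the following holds: whenever $b:V_1\times V_2\to\mathbb R$ is bilinear and $b(x,[x,x'])=0$ for all $x,x'\in V_1$, then $b=0$.
   Context: A step-two Carnot group is $\mathbb G=V_1\times V_2$, where $V_1,V_2$ are finite-dimensional real vector spaces with $V_2\neq\{0\}$, equipped with a bilinear skew-symmetric map $[\cdot,\cdot]:V_1\times V_1\to V_2$ with $\operatorname{span}\{[x,x']:x,x'\in V_1\}=V_2$, and group law $(x,z)\cdot(x',z')=(x+x',z+z'+[x,x'])$. $\mathcal A_h(\mathbb G)$ is the space of $h$-affine maps $f:\mathbb G\to\mathbb R$, i.e. such that for all $(x,z)\in\mathbb G$, $y\in V_1$, $t\in\mathbb R\mapsto f((x,z)\cdot(ty,0))$ is affine; $\mathcal A(V_1\times V_2)$ is the space of maps that are affine in the usual sense on the vector space $V_1\times V_2$. *)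

From HB Require Import structures.
From mathcomp Require Import all_boot all_order all_algebra.
From mathcomp Require Import reals.
Set Implicit Arguments. Unset Strict Implicit. Unset Printing Implicit Defensive.
Import Order.TTheory GRing.Theory Num.Theory.
Local Open Scope ring_scope.

Definition bilinear_skew (R : realType) (V1 V2 : vectType R)
  (br : V1 -> V1 -> V2) : Prop :=
  (forall (a : R) (x y z : V1), br (a *: x + y) z = a *: br x z + br y z) /\
  (forall (a : R) (x y z : V1), br z (a *: x + y) = a *: br z x + br z y) /\
  (forall x y : V1, br x y = - br y x).

Definition brackets_span (R : realType) (V1 V2 : vectType R)
  (br : V1 -> V1 -> V2) : Prop :=
  forall z : V2, exists (k : nat) (c : 'I_k -> R) (x x' : 'I_k -> V1),
    z = \sum_(i < k) c i *: br (x i) (x' i).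

Definition carnot2 (R : realType) (V1 V2 : vectType R)
  (br : V1 -> V1 -> V2) : Prop :=
  bilinear_skew br /\ brackets_span br /\ exists z : V2, z != 0.

Definition gmul (R : realType) (V1 V2 : vectType R) (br : V1 -> V1 -> V2)
  (p q : V1 * V2) : V1 * V2 :=
  (p.1 + q.1, p.2 + q.2 + br p.1 q.1).

Definition h_affine (R : realType) (V1 V2 : vectType R) (br : V1 -> V1 -> V2)
  (f : V1 * V2 -> R) : Prop :=
  forall (p : V1 * V2) (y : V1), exists a b : R,
    forall t : R, f (gmul br p (t *: y, 0)) = a * t + b.

Definition affine_map (R : realType) (V1 V2 : vectType R)
  (f : V1 * V2 -> R) : Prop :=
  exists (L : V1 * V2 -> R) (c : R),
    (forall (a : R) (p q : V1 * V2),
        L (a *: p.1 + q.1, a *: p.2 + q.2) = a * L p + L q) /\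
    (forall p, f p = L p + c).

Definition bilinear_form (R : realType) (V1 V2 : vectType R)
  (b : V1 -> V2 -> R) : Prop :=
  (forall (a : R) (x y : V1) (z : V2), b (a *: x + y) z = a * b x z + b y z) /\
  (forall (a : R) (x : V1) (z w : V2), b x (a *: z + w) = a * b x z + b x w).

From HB Require Import structures.
From mathcomp Require Import all_boot all_order all_algebra.
From mathcomp Require Import reals.
From mathcomp Require Import ring lra.
Set Implicit Arguments. Unset Strict Implicit. Unset Printing Implicit Defensive.
Import Order.TTheory GRing.Theory Num.Theory.
Local Open Scope ring_scope.

(* (=>) If [b] is bilinear and [b x [x, x'] = 0], then [(x, z) |-> b x z] is
   h-affine, hence affine, and an affine bilinear map vanishes.
   (<=) Affine maps are h-affine. Conversely let [g] be h-affine. By homogeneity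
   along horizontal lines, [hdiff g x z = g (x, z) - g (0, z)] is affine along
   every line of slope [l^2] in the plane [(v + t d, w + m [v, d])]; the slopes
   1, 4, 9 make it linear in [x]. Comparing horizontal lines with the same
   bracket term shows that [hdiff g x] is unchanged when [z] moves by [[x, y]],
   and that [g] is affine along the central lines [z + t [x, y]].
   Fix brackets [e_1, ..., e_N] spanning [V2]. If every central difference
   [g (., . + e_j) - g] is affine, then [hdiff g x z - hdiff g x 0] is bilinear and
   vanishes on [(x, [x, x'])], hence is [0] by hypothesis, and [g] is affine.
   Central differences along brackets square to zero and commute, so [N + 1] of
   them kill [g]; induction on the number of differences applied concludes. *)

Section AffineFunctions.
Variable R : realFieldType.
Implicit Types (phi psi : R -> R) (F : R -> R -> R).

Definition affine1 phi := exists a b, forall t, phi t = a * t + b.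

Lemma affine1E {phi} : affine1 phi -> forall t, phi t = phi 0 + t * (phi 1 - phi 0).
Proof. by case=> a [b phiE] t; rewrite !phiE; ring. Qed.

Lemma eq_affine1 phi psi : phi =1 psi -> affine1 phi -> affine1 psi.
Proof. by move=> eq_phi [a [b phiE]]; exists a, b => t; rewrite -eq_phi. Qed.

Lemma affine1_comb k1 k2 phi psi :
  affine1 phi -> affine1 psi -> affine1 (fun t => k1 * phi t + k2 * psi t).
Proof.
case=> a [b phiE] [a' [b' psiE]]; exists (k1 * a + k2 * a'), (k1 * b + k2 * b').
by move=> t; rewrite phiE psiE; ring.
Qed.

Lemma affine1_add_affine phi a b : affine1 phi -> affine1 (fun t => phi t + a * t + b).
Proof. by case=> a' [b' phiE]; exists (a' + a), (b' + b) => t; rewrite phiE; ring. Qed.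

Lemma affine1_second_diff phi t : affine1 phi -> phi (t + 2) - 2 * phi (t + 1) + phi t = 0.
Proof. by case=> a [b phiE]; rewrite !phiE; ring. Qed.

Lemma affine1_mul_const phi : affine1 phi -> affine1 (fun t => t * phi t) ->
  forall t, phi t = phi 0.
Proof.
move=> [a [b phiE]] [c [d tphiE]] t.
have := tphiE 0; have := tphiE 1; have := tphiE (-1); rewrite !phiE => *.
have -> : a = 0 by lra.
ring.
Qed.

(* [G s1 s2 := F (s1 + s2) (s1 + 4 s2)] is affine in each variable, hence of the
   form [c0 + c1 s1 + c2 s2 + c12 s1 s2]; slope 9 forces [c12 = 0]. *)
Lemma affine1_of_three_slopes F :
  (forall t0 m0, affine1 (fun s => F (t0 + s) (m0 + s))) ->
  (forall t0 m0, affine1 (fun s => F (t0 + s) (m0 + 4 * s))) ->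
  (forall t0 m0, affine1 (fun s => F (t0 + s) (m0 + 9 * s))) ->
  affine1 (fun t => F t 0).
Proof.
move=> slope1 slope4 slope9.
pose G s1 s2 := F (s1 + s2) (s1 + 4 * s2).
have G_s1 s1 s2 : G s1 s2 = G 0 s2 + s1 * (G 1 s2 - G 0 s2).
  have := affine1E (slope1 s2 (4 * s2)) s1; rewrite /G !add0r !addr0.
  by rewrite [s2 + s1]addrC [4 * s2 + s1]addrC [s2 + 1]addrC [4 * s2 + 1]addrC.
have G_s2 s1 s2 : G s1 s2 = G s1 0 + s2 * (G s1 1 - G s1 0).
  exact: (affine1E (slope4 s1 s1) s2).
have GE s1 s2 : G s1 s2 = G 0 0 + s1 * (G 1 0 - G 0 0) + s2 * (G 0 1 - G 0 0)
    + s1 * s2 * (G 1 1 - G 1 0 - G 0 1 + G 0 0).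
  by rewrite G_s1 (G_s2 0 s2) (G_s2 1 s2); ring.
have c12_eq0 : G 1 1 - G 1 0 - G 0 1 + G 0 0 = 0.
  have := affine1E (slope9 0 0) 3; have := affine1E (slope9 0 0) (-3).
  rewrite !add0r !mulr0.
  have -> : F 3 (9 * 3) = G (-5) 8 by rewrite /G; congr F; ring.
  have -> : F (-3) (9 * -3) = G 5 (-8) by rewrite /G; congr F; ring.
  have -> : F 0 0 = G 0 0 by rewrite /G; congr F; ring.
  rewrite (GE (-5) 8) (GE 5 (-8)); lra.
exists ((4 * (G 1 0 - G 0 0) - (G 0 1 - G 0 0)) / 3), (G 0 0) => t.
have -> : F t 0 = G (4 / 3 * t) (- 1 / 3 * t) by rewrite /G; congr F; field.
by rewrite GE c12_eq0; field.
Qed.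

End AffineFunctions.

Section SpanSteps.
Variables (K : fieldType) (V : vectType K) (X : seq V) (phi alpha : V -> K).
Hypothesis phi_step : forall e, e \in X -> forall z s, phi (z + s *: e) = phi z + s * alpha e.

Lemma step_sum (r : seq 'I_(size X)) (t : 'I_(size X) -> K) z :
  phi (z + \sum_(i <- r) t i *: X`_i) = phi z + \sum_(i <- r) t i * alpha X`_i.
Proof.
elim: r z => [|i r IHr] z; first by rewrite !big_nil !addr0.
have Xi : X`_i \in X := mem_nth 0 (ltn_ord i).
by rewrite !big_cons addrA IHr phi_step //; ring.
Qed.

Lemma affine_on_span a z w : z \in <<X>>%VS -> w \in <<X>>%VS ->
  phi (a *: z + w) - phi 0 = a * (phi z - phi 0) + (phi w - phi 0).
Proof.
pose c i v := coord (in_tuple X) i v.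
have phiE v : v \in <<X>>%VS -> phi v = phi 0 + \sum_i c i v * alpha X`_i.
  move=> Xv; rewrite [in LHS](coord_span (X := in_tuple X) Xv) -[v in phi v]add0r.
  by rewrite step_sum.
move=> Xz Xw; have Xazw : a *: z + w \in <<X>>%VS by rewrite memvD ?memvZ.
rewrite (phiE _ Xazw) (phiE _ Xz) (phiE _ Xw).
rewrite /c; under eq_bigr do rewrite linearP /= mulrDl -mulrA.
by rewrite big_split /= -mulr_sumr; ring.
Qed.

End SpanSteps.

Definition hdiff {V1 V2 R : zmodType} (g : V1 * V2 -> R) x z := g (x, z) - g (0, z).

Lemma hdiffK {V1 V2 R : zmodType} (g : V1 * V2 -> R) x z : g (0, z) + hdiff g x z = g (x, z).
Proof. exact: subrKC. Qed.

Section LinearForms.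
Variables (R : realType) (V1 V2 : vectType R).

Definition linear2 (L : V1 * V2 -> R) := forall (a : R) (p q : V1 * V2),
  L (a *: p.1 + q.1, a *: p.2 + q.2) = a * L p + L q.

Lemma linear2_0 {L} : linear2 L -> L (0, 0) = 0.
Proof. by move=> linL; have := linL 1 0 0; rewrite /= !scaler0 !addr0 mul1r; lra. Qed.

Lemma linear2_split {L} x z : linear2 L -> L (x, z) = L (x, 0) + L (0, z).
Proof.
by move=> linL; have := linL 1 (x, 0) (0, z); rewrite /= scale1r scaler0 add0r addr0 mul1r.
Qed.

Lemma linear2_scale {L} a p : linear2 L -> L (a *: p.1, a *: p.2) = a * L p.
Proof.
by move=> linL; have := linL a p (0, 0); rewrite /= !addr0 (linear2_0 linL) addr0.
Qed.

Lemma affine_map_hdiff (f : V1 * V2 -> R) x z : affine_map f -> hdiff f x z = hdiff f x 0.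
Proof.
case=> L [c [linL fE]]; rewrite /hdiff !fE.
by rewrite (linear2_split x z linL) (linear2_split 0 z linL) (linear2_0 linL); ring.
Qed.

Lemma affine_map0 : affine_map (fun _ : V1 * V2 => 0).
Proof. by exists (fun _ => 0), 0; split => *; ring. Qed.

Section Bilinear.
Variable b : V1 -> V2 -> R.
Hypothesis hb : bilinear_form b.

Lemma bilinDl x y z : b (x + y) z = b x z + b y z.
Proof. by case: hb => bl _; rewrite -[x]scale1r bl mul1r scale1r. Qed.

Lemma bilinDr x z w : b x (z + w) = b x z + b x w.
Proof. by case: hb => _ br; rewrite -[z]scale1r br mul1r scale1r. Qed.

Lemma bilinZl a x z : b (a *: x) z = a * b x z.
Proof.
case: hb => bl _; have := bl a x 0 z; rewrite addr0 => ->.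
suff -> : b 0 z = 0 by rewrite addr0.
by have := bilinDl 0 0 z; rewrite addr0; lra.
Qed.

Lemma bilinZr a x z : b x (a *: z) = a * b x z.
Proof.
case: hb => _ br; have := br a x z 0; rewrite addr0 => ->.
suff -> : b x 0 = 0 by rewrite addr0.
by have := bilinDr x 0 0; rewrite addr0; lra.
Qed.

Lemma bilinear_affine_eq0 : affine_map (fun p => b p.1 p.2) -> forall x z, b x z = 0.
Proof.
case=> L [c [linL bE]] x z.
have c0 : c = 0.
  by have := bE (0, 0); rewrite /= (linear2_0 linL) -(scale0r 0) bilinZl; lra.
have := bE (2 *: x, 2 *: z); have := bE (x, z).
by rewrite /= bilinZl bilinZr (linear2_scale 2 (x, z) linL) c0; lra.
Qed.

End Bilinear.
End LinearForms.

Section StepTwo.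
Variables (R : realType) (V1 V2 : vectType R) (br : V1 -> V1 -> V2).
Hypothesis hbr : bilinear_skew br.

Lemma br0l z : br 0 z = 0.
Proof.
case: hbr => brl _; have /eqP := brl 1 0 0 z.
by rewrite !scale1r addr0 -subr_eq subrr eq_sym => /eqP.
Qed.

Lemma br0r z : br z 0 = 0.
Proof.
case: hbr => _ [brr _]; have /eqP := brr 1 0 0 z.
by rewrite !scale1r addr0 -subr_eq subrr eq_sym => /eqP.
Qed.

Lemma brDl x y z : br (x + y) z = br x z + br y z.
Proof. by case: hbr => brl _; rewrite -[x]scale1r brl !scale1r. Qed.

Lemma brDr x y z : br z (x + y) = br z x + br z y.
Proof. by case: hbr => _ [brr _]; rewrite -[x]scale1r brr !scale1r. Qed.

Lemma brZl a x z : br (a *: x) z = a *: br x z.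
Proof. by case: hbr => brl _; rewrite -[a *: x]addr0 brl br0l addr0. Qed.

Lemma brZr a x z : br z (a *: x) = a *: br z x.
Proof. by case: hbr => _ [brr _]; rewrite -[a *: x]addr0 brr br0r addr0. Qed.

Lemma brC x y : br x y = - br y x.
Proof. by case: hbr => _ [_ skew]. Qed.

Lemma brNr x y : br x (- y) = - br x y.
Proof. by rewrite -scaleN1r brZr scaleN1r. Qed.

Lemma brxx x : br x x = 0.
Proof.
have /eqP := brC x x; rewrite -addr_eq0 -mulr2n -scaler_nat scaler_eq0.
by rewrite pnatr_eq0 /= => /eqP.
Qed.

Lemma gmulA p q r : gmul br (gmul br p q) r = gmul br p (gmul br q r).
Proof.
rewrite /gmul /= addrA brDl brDr; congr pair.
by rewrite !addrA (ACl (1*2*4*6*3*5)).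
Qed.

Lemma gmul_central w p : gmul br (0, w) p = (p.1, p.2 + w).
Proof. by rewrite /gmul /= br0l addr0 add0r addrC. Qed.

Lemma h_affine_lmul q g : h_affine br g -> h_affine br (fun p => g (gmul br q p)).
Proof.
by move=> hg p y; have [a [b gE]] := hg (gmul br q p) y; exists a, b => t; rewrite -gmulA.
Qed.

Lemma h_affineB g1 g2 : h_affine br g1 -> h_affine br g2 -> h_affine br (fun p => g1 p - g2 p).
Proof.
move=> hg1 hg2 p y; have [a1 [b1 g1E]] := hg1 p y; have [a2 [b2 g2E]] := hg2 p y.
by exists (a1 - a2), (b1 - b2) => t; rewrite g1E g2E; ring.
Qed.

Lemma affine_map_lmul q f : affine_map f -> affine_map (fun p => f (gmul br q p)).
Proof.
case=> L [c [linL fE]].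
exists (fun p => L (p.1, p.2 + br q.1 p.1)), (L q + c); split => [a p p'|p] /=.
  rewrite -linL brDr brZr scalerDr; congr (L (_, _)).
  by rewrite -!addrA; congr (_ + _); rewrite addrCA.
rewrite addrA; have := linL 1 (p.1, p.2 + br q.1 p.1) q; rewrite /= !scale1r mul1r => <-.
by rewrite fE /gmul /= [q.1 + _]addrC [q.2 + _]addrC addrAC.
Qed.

Lemma affine_map_h_affine f : affine_map f -> h_affine br f.
Proof.
case=> L [c [linL fE]] [x z] y; exists (L (y, br x y)), (L (x, z) + c) => t.
by rewrite fE /gmul /= addr0 brZr mulrC addrA -linL /= [x + _]addrC [z + _]addrC.
Qed.

Section HAffine.
Variable g : V1 * V2 -> R.
Hypothesis hg : h_affine br g.

Lemma hline_affine x z y : affine1 (fun t => g (x + t *: y, z + t *: br x y)).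
Proof. by have [a [b gE]] := hg (x, z) y; exists a, b => t; rewrite -gE /gmul /= addr0 brZr. Qed.

Lemma hdiffZ t v w : hdiff g (t *: v) w = t * hdiff g v w.
Proof.
have := affine1E (hline_affine 0 w v) t.
by rewrite /hdiff /= br0l !scaler0 !addr0 !add0r scale0r scale1r => ->; ring.
Qed.

Lemma hdiff_slope_affine v d w l t0 m0 : l != 0 ->
  affine1 (fun s => hdiff g (v + (t0 + s) *: d) (w + (m0 + l * l * s) *: br v d)).
Proof.
move=> l_neq0.
pose W s := w + (m0 + l * l * s) *: br v d.
have lineE k s : k * k = l * l ->
    g (k *: (v + t0 *: d) + s *: (k *: d),
       (w + m0 *: br v d) + s *: br (k *: (v + t0 *: d)) (k *: d))
    = g (0, W s) + k * hdiff g (v + (t0 + s) *: d) (W s).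
  move=> kk.
  have -> : k *: (v + t0 *: d) + s *: (k *: d) = k *: (v + (t0 + s) *: d).
    by rewrite scalerDl !scalerDr !scalerA addrA [s * k]mulrC.
  have -> : w + m0 *: br v d + s *: br (k *: (v + t0 *: d)) (k *: d) = W s.
    rewrite brZl brZr brDl brZl brxx scaler0 addr0 !scalerA.
    by rewrite /W scalerDl addrA kk [s * _]mulrC.
  by rewrite -hdiffZ hdiffK.
(* subtracting the lines for [k = l] and [k = - l] isolates the [hdiff] term *)
have := affine1_comb (2 * l)^-1 (- (2 * l)^-1)
  (hline_affine (l *: (v + t0 *: d)) (w + m0 *: br v d) (l *: d))
  (hline_affine ((- l) *: (v + t0 *: d)) (w + m0 *: br v d) ((- l) *: d)).
by apply: eq_affine1 => s /=; rewrite !lineE ?mulrNN //; field.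
Qed.

Lemma hdiff_line_affine v d w : affine1 (fun t => hdiff g (v + t *: d) w).
Proof.
pose F t m := hdiff g (v + t *: d) (w + m *: br v d).
have slope k l : l != 0 -> k = l * l ->
    forall t0 m0, affine1 (fun s => F (t0 + s) (m0 + k * s)).
  by move=> l_neq0 -> t0 m0; apply: hdiff_slope_affine.
have slope1 t0 m0 : affine1 (fun s => F (t0 + s) (m0 + s)).
  by apply: eq_affine1 (slope 1 1 (oner_neq0 _) (esym (mulr1 1)) t0 m0) => s; rewrite mul1r.
apply: eq_affine1 (affine1_of_three_slopes slope1 _ _) => [t|t0 m0|t0 m0].
- by rewrite /F scale0r addr0.
- by apply: (slope _ 2); rewrite ?pnatr_eq0 // -natrM.
- by apply: (slope _ 3); rewrite ?pnatr_eq0 // -natrM.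
Qed.

Lemma hdiffD x y w : hdiff g (x + y) w = hdiff g x w + hdiff g y w.
Proof.
have midE : x + y = 2 *: (x + 2^-1 *: (y - x)).
  rewrite scalerDr scalerA divff ?pnatr_eq0 // scale1r scaler_nat mulr2n.
  by rewrite -addrA subrKC.
rewrite midE hdiffZ (affine1E (hdiff_line_affine x (y - x) w)) /=.
by rewrite scale0r scale1r addr0 subrKC; field.
Qed.

Lemma hlines_hdiff_affine u u' d d' z : br u d = br u' d' ->
  affine1 (fun t => hdiff g (u + t *: d) (z + t *: br u d)
                    - hdiff g (u' + t *: d') (z + t *: br u d)).
Proof.
move=> brE; have := affine1_comb 1 (-1) (hline_affine u z d) (hline_affine u' z d').
by apply: eq_affine1 => t /=; rewrite brE /hdiff; ring.
Qed.

(* both [hdiff g x (z + t [x, y])] and [t] times it are affine in [t] *)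
Lemma hdiff_bracket_shift x y z t : hdiff g x (z + t *: br x y) = hdiff g x z.
Proof.
have shift_affine : affine1 (fun t => hdiff g x (z + t *: br x y)).
  have brE : br (x - y) x = br (- y) x by rewrite brDl brxx add0r.
  have brNE : br (- y) x = br x y by rewrite brC brNr opprK.
  have := hlines_hdiff_affine z brE; apply: eq_affine1 => s.
  by rewrite brE brNE -[x - y + _]addrA hdiffD; ring.
have t_shift_affine : affine1 (fun t => t * hdiff g x (z + t *: br x y)).
  have brE : br x (y + x) = br x y by rewrite brDr brxx addr0.
  have := hlines_hdiff_affine z brE; apply: eq_affine1 => s.
  by rewrite brE scalerDr addrA !hdiffD !hdiffZ; ring.
by rewrite (affine1_mul_const shift_affine t_shift_affine t) scale0r addr0.
Qed.

Lemma central_line_affine0 x y z : affine1 (fun t => g (0, z + t *: br x y)).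
Proof.
have := affine1_add_affine (- hdiff g y z) (- hdiff g x z) (hline_affine x z y).
apply: eq_affine1 => t; rewrite -hdiffK hdiffD hdiffZ hdiff_bracket_shift.
have -> : br x y = br y (- x) by rewrite brNr -brC.
by rewrite hdiff_bracket_shift; ring.
Qed.

End HAffine.

Lemma central_line_affine g a x y z : h_affine br g ->
  affine1 (fun t => g (a, z + t *: br x y)).
Proof.
move=> hg; have := central_line_affine0 (h_affine_lmul (a, 0) hg) x y z.
by apply: eq_affine1 => t; rewrite /gmul /= br0r !addr0 add0r.
Qed.

Definition cdiff e (g : V1 * V2 -> R) p := g (p.1, p.2 + e) - g p.

Definition cdiffs r g := foldr cdiff g r.

Lemma hdiff_cdiff e g x z : hdiff (cdiff e g) x z = hdiff g x (z + e) - hdiff g x z.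
Proof. by rewrite /hdiff /cdiff /=; ring. Qed.

Lemma cdiff0 e : cdiff e (fun _ => 0) = fun _ => 0.
Proof. by apply: boolp.funext => p; rewrite /cdiff subrr. Qed.

Lemma cdiffC e e' g : cdiff e (cdiff e' g) = cdiff e' (cdiff e g).
Proof. by apply: boolp.funext => p; rewrite /cdiff /= [p.2 + e' + e]addrAC; ring. Qed.

Lemma cdiff_lmul q e g :
  cdiff e (fun p => g (gmul br q p)) = fun p => cdiff e g (gmul br q p).
Proof. by apply: boolp.funext => p; rewrite /cdiff /gmul /= -!addrA [e + _]addrC. Qed.

Lemma h_affine_cdiff e g : h_affine br g -> h_affine br (cdiff e g).
Proof.
move=> hg; apply: h_affineB => //.
have -> : (fun p => g (p.1, p.2 + e)) = (fun p => g (gmul br (0, e) p)).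
  by apply: boolp.funext => p; rewrite gmul_central.
exact: h_affine_lmul.
Qed.

Lemma h_affine_cdiffs r g : h_affine br g -> h_affine br (cdiffs r g).
Proof. by move=> hg; elim: r => //= e r; apply: h_affine_cdiff. Qed.

Lemma cdiff_bracket_nilpotent x y g : h_affine br g ->
  cdiff (br x y) (cdiff (br x y) g) = fun _ => 0.
Proof.
move=> hg; apply: boolp.funext => -[a z]; rewrite /cdiff /=.
have := affine1_second_diff 0 (central_line_affine a x y z hg).
by rewrite !add0r scale0r scale1r scaler_nat mulr2n !addrA addr0 => <-; ring.
Qed.

Section Directions.
Variable X : seq V2.
Hypothesis X_brackets : forall e, e \in X -> exists x y, e = br x y.
Hypothesis X_span : forall z, z \in <<X>>%VS.

Lemma cdiff_cdiffs_eq0 e r g : h_affine br g -> e \in X -> e \in r ->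
  cdiff e (cdiffs r g) = fun _ => 0.
Proof.
move=> hg Xe; have [x [y ->]] := X_brackets Xe.
elim: r => [|e' r IHr] //=; rewrite inE => /predU1P [<- | er].
  exact/cdiff_bracket_nilpotent/h_affine_cdiffs.
by rewrite cdiffC IHr // cdiff0.
Qed.

Lemma cdiffs_eq0 r g : h_affine br g -> {subset r <= X} -> (size X < size r)%N ->
  cdiffs r g = fun _ => 0.
Proof.
move=> hg rX ltXr; suff : ~~ uniq r.
  elim: r rX {ltXr} => [|e r IHr] //= rX; rewrite negb_and negbK => /orP [er | /IHr ->].
  - by apply: cdiff_cdiffs_eq0 => //; apply: rX; rewrite inE eqxx.
  - exact: cdiff0.
  - by move=> e' re'; apply: rX; rewrite inE re' orbT.
by apply/negP => uniq_r; have := uniq_leq_size uniq_r rX; rewrite leqNgt ltXr.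
Qed.

Hypothesis no_bilinear : forall b : V1 -> V2 -> R, bilinear_form b ->
  (forall x x', b x (br x x') = 0) -> forall x z, b x z = 0.

Lemma hdiff_central_invariant g : h_affine br g ->
  (forall e, e \in X -> affine_map (cdiff e g)) -> forall x z, hdiff g x z = hdiff g x 0.
Proof.
move=> hg cdiff_affine x0 z0.
have step x e : e \in X ->
    forall z s, hdiff g x (z + s *: e) = hdiff g x z + s * (hdiff g x e - hdiff g x 0).
  move=> Xe z s; have incr := affine_map_hdiff x z (cdiff_affine e Xe).
  rewrite !hdiff_cdiff add0r in incr.
  have [u [v eE]] := X_brackets Xe; rewrite eE in incr *.
  have := affine1E (central_line_affine x u v z hg) s.
  have := affine1E (central_line_affine 0 u v z hg) s.
  move: incr; rewrite /hdiff /= scale0r scale1r !addr0 => incr -> ->.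
  by rewrite -incr; ring.
pose b x z := hdiff g x z - hdiff g x 0.
have b_bilinear : bilinear_form b.
  split=> [a x y z | a x z w]; first by rewrite /b !(hdiffD hg) !(hdiffZ hg); ring.
  exact: (affine_on_span (step x) a (X_span z) (X_span w)).
have b_bracket x x' : b x (br x x') = 0.
  by have := hdiff_bracket_shift hg x x' 0 1; rewrite /b add0r scale1r => ->; rewrite subrr.
by have := no_bilinear b_bilinear b_bracket x0 z0; rewrite /b => /eqP; rewrite subr_eq0 => /eqP.
Qed.

Lemma affine_map_of_affine_cdiffs g : h_affine br g ->
  (forall e, e \in X -> affine_map (cdiff e g)) -> affine_map g.
Proof.
move=> hg cdiff_affine.
pose m z := g (0, z).
have gE x z : g (x, z) = m z + hdiff g x 0.
  by rewrite -(hdiff_central_invariant hg cdiff_affine x z) hdiffK.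
have m_shift a x z : m (z + br a x) - m z = m (br a x) - m 0.
  have hga := h_affine_lmul (a, 0) hg.
  have cdiff_ga_affine e : e \in X -> affine_map (cdiff e (fun p => g (gmul br (a, 0) p))).
    by move=> Xe; rewrite cdiff_lmul; apply/affine_map_lmul/cdiff_affine.
  have := hdiff_central_invariant hga cdiff_ga_affine x z.
  rewrite /hdiff /gmul /= br0r !addr0 !add0r.
  rewrite (gE (a + x) (z + br a x)) (gE a z) (gE (a + x) (br a x)) (gE a 0); lra.
have m_step e : e \in X -> forall z s, m (z + s *: e) = m z + s * (m e - m 0).
  move=> Xe z s; have [u [v ->]] := X_brackets Xe.
  have shift := m_shift (s *: u) v z; rewrite brZl in shift.
  have := affine1E (central_line_affine0 hg u v 0) s.
  rewrite /= scale0r scale1r !add0r => m_line.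
  by rewrite -[LHS](subrK (m z)) shift /m m_line; ring.
exists (fun p => hdiff g p.1 0 + (m p.2 - m 0)), (m 0); split=> [a p q | [x z]] /=.
  by rewrite (affine_on_span m_step a (X_span p.2) (X_span q.2)) (hdiffD hg) (hdiffZ hg); ring.
by rewrite gE; ring.
Qed.

Lemma h_affine_affine_map g : h_affine br g -> affine_map g.
Proof.
move=> hg.
suff cdiffs_affine k r : {subset r <= X} -> (size X < size r + k)%N ->
    affine_map (cdiffs r g) by exact: (cdiffs_affine (size X).+1 [::]).
elim: k r => [|k IHk] r rX ltXr.
  by rewrite addn0 in ltXr; rewrite (cdiffs_eq0 hg rX ltXr); apply: affine_map0.
apply: affine_map_of_affine_cdiffs; first exact: h_affine_cdiffs.
move=> e Xe; apply: (IHk (e :: r)); last by rewrite /= addSnnS.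
by move=> e'; rewrite inE => /predU1P [-> | /rX].
Qed.

End Directions.

Lemma bilinear_h_affine b : bilinear_form b -> (forall x x', b x (br x x') = 0) ->
  h_affine br (fun p => b p.1 p.2).
Proof.
move=> hb b_br [x z] y; exists (b y z), (b x z) => t.
have b_br' : b y (br x y) = 0 by rewrite brC -brNr b_br.
rewrite /gmul /= addr0 brZr (bilinDl hb) !(bilinDr hb) !(bilinZl hb) !(bilinZr hb).
by rewrite b_br b_br'; ring.
Qed.

Lemma brackets_span_seq : brackets_span br -> exists X : seq V2,
  (forall e, e \in X -> exists x y, e = br x y) /\ (forall z, z \in <<X>>%VS).
Proof.
move=> hspan.
have covers (l : seq V2) : exists X : seq V2,
    (forall e, e \in X -> exists x y, e = br x y) /\ {subset l <= <<X>>%VS}.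
  elim: l => [|z l [X [X_br lX]]]; first by exists [::].
  have [k [c [x [x' zE]]]] := hspan z.
  exists ([seq br (x i) (x' i) | i <- enum 'I_k] ++ X); split.
    move=> e; rewrite mem_cat => /orP [/mapP [i _ ->] | /X_br //].
    by exists (x i), (x' i).
  move=> y; rewrite inE => /predU1P [-> | /lX yX].
    rewrite zE; apply: memv_suml => i _; apply/memvZ/memv_span.
    by rewrite mem_cat map_f ?mem_enum.
  by apply: (subvP (sub_span _)) yX => e eX; rewrite mem_cat eX orbT.
have [X [X_br basisX]] := covers (vbasis fullv).
exists X; split=> // z; have /subvP := introT span_subvP basisX; apply.
by rewrite (span_basis (vbasisP fullv)) memvf.
Qed.

End StepTwo.

Theorem theorem5p12 (R : realType) (V1 V2 : vectType R)
  (br : V1 -> V1 -> V2) (HG : carnot2 br) :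
  (forall f : V1 * V2 -> R, h_affine br f <-> affine_map f) <->
  (forall b : V1 -> V2 -> R, bilinear_form b ->
     (forall x x' : V1, b x (br x x') = 0) ->
     forall (x : V1) (z : V2), b x z = 0).
Proof.
case: HG => hbr [hspan _]; split=> [h_affine_iff b hb b_br | no_bilinear f].
  apply: (bilinear_affine_eq0 hb); apply/h_affine_iff.
  exact: bilinear_h_affine.
split; last exact: affine_map_h_affine.
have [X [X_br X_span]] := brackets_span_seq hspan.
exact: (h_affine_affine_map hbr X_br X_span no_bilinear).
Qed.
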